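(* There are absolute constants $B_0$ and $M$ such that the following holds. Let $k,k'$ be integers with $1\le k\le k'\le k+10$, $u_1=e^{ikx}e^{-k^2t}$, $u_2=e^{ik'y}e^{-(k')^2t}$. For every $c_1>0$ and $t_1\ge0$, with $c_2>0$ defined by $c_1e^{-k^2t_1}=c_2e^{-(k')^2t_1}$, there exist a $C^2$ complex function $u$ and a continuous $\mathbb{C}^2$-valued vector field $B$ with $|B|\le B_0$ on $\mathbb{T}^2\times[t_1,t_1+\frac7{2k}]$ such that $\dot u=\Delta u+B\cdot\nabla u$ there, and: for $t\in[t_1,t_1+\frac1{2k}]$, $u=c_1u_1$ and $B=0$; for $t\in[t_1+\frac3k,t_1+\frac7{2k}]$, $u=c_2u_2$ and $B=0$; and for $t\in[t_1,t_1+\frac7{2k}]$, $u=f(t)e^{ikx}+g(t)e^{ik'y}$ with $f,g\in C^2$ satisfying, for $0\le\alpha\le2$, $|f^{(\alpha)}(t)|\le Mc_1k^{2\alpha}e^{-k^2t}$ and $|g^{(\alpha)}(t)|\le Mc_2(k')^{2\alpha}e^{-(k')^2t}$.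
   Context: $\mathbb{T}^2=(\mathbb{R}/2\pi\mathbb{Z})^2$ with coordinates $(x,y)$; $t$ the third coordinate; $\dot u=\partial_tu$; $\Delta$ and $\nabla$ are in the spatial variables $(x,y)$, and $B\cdot\nabla u=B_1\partial_xu+B_2\partial_yu$. *)

From Stdlib Require Export Reals.
From Coquelicot Require Export Coquelicot.
Open Scope R_scope.

Definition cis (th : R) : C := (cos th, sin th).

Definition CDerive (h : R -> C) (s : R) : C :=
  (Derive (fun r => fst (h r)) s, Derive (fun r => snd (h r)) s).

Definition dx (u : R -> R -> R -> C) (x y t : R) : C := CDerive (fun s => u s y t) x.
Definition dy (u : R -> R -> R -> C) (x y t : R) : C := CDerive (fun s => u x s t) y.
Definition dt (u : R -> R -> R -> C) (x y t : R) : C := CDerive (fun s => u x y s) t.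

Definition laplacian (u : R -> R -> R -> C) (x y t : R) : C :=
  Cplus (dx (dx u) x y t) (dy (dy u) x y t).

Definition Bgrad (B : R -> R -> R -> C * C) (u : R -> R -> R -> C) (x y t : R) : C :=
  Cplus (Cmult (fst (B x y t)) (dx u x y t)) (Cmult (snd (B x y t)) (dy u x y t)).

Definition C2norm (v : C * C) : R := sqrt (Cmod (fst v) ^ 2 + Cmod (snd v) ^ 2).

(* the closed slab T^2 x [a,b], T^2 points represented by (x,y) in R^2 *)
Definition slab (a b : R) (p : R * R * R) : Prop := a <= snd p <= b.

Definition cont_on_slab (B : R -> R -> R -> C * C) (a b : R) : Prop :=
  forall p : R * R * R, slab a b p ->
    filterlim (fun q : R * R * R => B (fst (fst q)) (snd (fst q)) (snd q))
      (within (slab a b) (locally p))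
      (locally (B (fst (fst p)) (snd (fst p)) (snd p))).

(* 2pi-periodicity in x and y: B is a field on the torus *)
Definition torus_periodic {V : Type} (B : R -> R -> R -> V) : Prop :=
  forall x y t, B (x + 2 * PI) y t = B x y t /\ B x (y + 2 * PI) t = B x y t.

Definition C2_with (h h1 h2 : R -> C) : Prop :=
  (forall s, is_derive h s (h1 s)) /\ (forall s, is_derive h1 s (h2 s)) /\
  (forall s, continuous h2 s).

(* With real [f], [g], the ansatz [u = f(t) e^{ikx} + g(t) e^{ik'y}] turns the equation into an
   ODE system once the drift exchanges the two modes: for
   [B = (-i be e^{i(k'y - kx)}, -i ga e^{i(kx - k'y)})] one has
   [B.grad u = k be f e^{ik'y} + k' ga g e^{ikx}], so it suffices that
   [f' + k^2 f = k' ga g] and [g' + k'^2 g = k be f].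
   Take [f = c1 e^{-k^2 t} phi] and [g = c2 e^{-k'^2 t} psi], where [psi] rises from 0 to 1 and
   afterwards [phi] falls from 1 to 0, both within [O(1/k)] time and built from a C^2 cubic
   spline step.  As [phi = 1] while [psi] moves and [psi = 1] while [phi] moves, the system is
   solved by explicit [be], [ga]; the matching condition [c1 e^{-k^2 t1} = c2 e^{-k'^2 t1}]
   leaves in them only the factors [e^{+-(k'^2 - k^2)(t - t1)}], which stay bounded because
   [k' - k <= 10] and the exchange lasts [O(1/k)]. *)

From Stdlib Require Import Lra Nsatz.
Open Scope R_scope.

Definition ramp (x : R) : R := (x + Rabs x) / 2.

Lemma ramp_eq0 x : x <= 0 -> ramp x = 0.
Proof. intros; unfold ramp; rewrite Rabs_left1; lra. Qed.

Lemma ramp_id x : 0 <= x -> ramp x = x.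
Proof. intros; unfold ramp; rewrite Rabs_pos_eq; lra. Qed.

Lemma ramp_bounds x a : x <= a -> 0 <= a -> 0 <= ramp x <= a.
Proof. intros; destruct (Rle_dec 0 x); [rewrite ramp_id | rewrite ramp_eq0]; lra. Qed.

Lemma continuous_ramp x : continuous ramp x.
Proof.
  apply (continuous_mult (fun x => x + Rabs x) (fun _ => /2)).
  - apply (continuous_plus (fun x => x) Rabs); [apply continuous_id | apply continuous_Rabs].
  - apply continuous_const.
Qed.

Lemma is_derive_mult_Rabs x : is_derive (fun x => x * Rabs x) x (2 * Rabs x).
Proof.
  destruct (Req_dec x 0) as [-> | Hx].
  - apply is_derive_Reals; intros eps Heps; exists (mkposreal eps Heps).
    intros h Hh Hhe; simpl in Hhe.
    replace (((0 + h) * Rabs (0 + h) - 0 * Rabs 0) / h - 2 * Rabs 0) with (Rabs h)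
      by (rewrite Rplus_0_l, Rabs_R0; field; exact Hh).
    now rewrite Rabs_Rabsolu.
  - assert (H := is_derive_mult (fun x => x) Rabs x _ _ (is_derive_id x)
                   (is_derive_Rabs _ _ _ (is_derive_id x) Hx) Rmult_comm).
    replace (2 * Rabs x) with (1 * Rabs x + x * (sign x * 1)); [exact H|].
    destruct (Rle_dec 0 x).
    + rewrite sign_eq_1, Rabs_pos_eq by lra; ring.
    + rewrite sign_eq_m1, Rabs_left by lra; ring.
Qed.

Lemma is_derive_ramp_sqr_half x : is_derive (fun x => ramp x ^ 2 / 2) x (ramp x).
Proof.
  apply (is_derive_ext (fun x => (x * x + x * Rabs x) / 4)).
  { intros s; unfold ramp; destruct (Rle_dec 0 s);
      [rewrite Rabs_pos_eq | rewrite Rabs_left1]; try lra; field. }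
  assert (Hsq : is_derive (fun x => x * x) x (2 * x)) by (auto_derive; trivial; ring).
  assert (H := is_derive_scal _ x (/4) _ (is_derive_plus _ _ _ _ _ Hsq (is_derive_mult_Rabs x))).
  replace (ramp x) with (scal (/4) (plus (2 * x) (2 * Rabs x)))
    by (unfold ramp, scal, plus; simpl; unfold mult; simpl; field).
  eapply is_derive_ext; [|exact H]; intros s; unfold scal, plus, mult; simpl; field.
Qed.

Lemma mul_ramp x : x * ramp x = ramp x ^ 2.
Proof. destruct (Rle_dec 0 x); [rewrite ramp_id | rewrite ramp_eq0]; try lra; ring. Qed.

Lemma is_derive_ramp_cube_sixth x : is_derive (fun x => ramp x ^ 3 / 6) x (ramp x ^ 2 / 2).
Proof.
  assert (H := is_derive_scal _ x (/3) _
                 (is_derive_mult _ _ x _ _ (is_derive_id x) (is_derive_ramp_sqr_half x)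
                    Rmult_comm)).
  replace (ramp x ^ 2 / 2) with (/3 * (1 * (ramp x ^ 2 / 2) + x * ramp x))
    by (rewrite mul_ramp; field).
  eapply is_derive_ext; [|exact H]; intros s; unfold mult; simpl.
  transitivity (/6 * (s * ramp s) * ramp s); [field | rewrite mul_ramp; simpl; field].
Qed.

Definition diff3 (p : R -> R) (s : R) : R := p s - 3 * p (s - 1) + 3 * p (s - 2) - p (s - 3).

Lemma is_derive_diff3 (p p' : R -> R) :
  (forall x, is_derive p x (p' x)) -> forall s, is_derive (diff3 p) s (diff3 p' s).
Proof.
  intros Hp s; unfold diff3.
  auto_derive.
  - repeat split; eexists; apply Hp.
  - rewrite !(is_derive_unique _ _ _ (Hp _)); unfold Rminus; ring.
Qed.

Lemma continuous_diff3 (p : R -> R) :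
  (forall x, continuous p x) -> forall s, continuous (diff3 p) s.
Proof.
  intros Hp s.
  assert (Hshift : forall a, continuous (fun s => p (s - a)) s).
  { intros a; apply (continuous_comp (fun s => s - a) p); [|apply Hp].
    apply (continuous_minus (fun s => s) (fun _ => a));
      [apply continuous_id | apply continuous_const]. }
  apply (continuous_minus (fun s => p s - 3 * p (s - 1) + 3 * p (s - 2))); [|apply Hshift].
  apply (continuous_plus (fun s => p s - 3 * p (s - 1))).
  - apply (continuous_minus p); [apply Hp|].
    apply (continuous_mult (fun _ => 3)); [apply continuous_const | apply Hshift].
  - apply (continuous_mult (fun _ => 3)); [apply continuous_const | apply Hshift].
Qed.

Lemma diff3_eq0 (p : R -> R) s : (forall x, x <= 0 -> p x = 0) -> s <= 0 -> diff3 p s = 0.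
Proof. intros Hp Hs; unfold diff3; rewrite !Hp by lra; ring. Qed.

Lemma diff3_bound (p : R -> R) A s :
  (forall x, x <= s -> 0 <= p x <= A) -> Rabs (diff3 p s) <= 4 * A.
Proof.
  intros Hp; unfold diff3.
  destruct (Hp s), (Hp (s - 1)), (Hp (s - 2)), (Hp (s - 3)); try lra.
  apply Rabs_le; lra.
Qed.

(* [step1] is the quadratic B-spline with knots 0, 1, 2, 3, so its primitive [step0] is a C^2
   transition from 0 to 1 on [[0, 3]]. *)
Definition step0 : R -> R := diff3 (fun x => ramp x ^ 3 / 6).
Definition step1 : R -> R := diff3 (fun x => ramp x ^ 2 / 2).
Definition step2 : R -> R := diff3 ramp.

Lemma is_derive_step0 s : is_derive step0 s (step1 s).
Proof. apply is_derive_diff3, is_derive_ramp_cube_sixth. Qed.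

Lemma is_derive_step1 s : is_derive step1 s (step2 s).
Proof. apply is_derive_diff3, is_derive_ramp_sqr_half. Qed.

Lemma continuous_step2 s : continuous step2 s.
Proof. apply continuous_diff3, continuous_ramp. Qed.

Lemma step0_le0 s : s <= 0 -> step0 s = 0.
Proof. apply diff3_eq0; intros x Hx; rewrite ramp_eq0 by exact Hx; field. Qed.

Lemma step1_le0 s : s <= 0 -> step1 s = 0.
Proof. apply diff3_eq0; intros x Hx; rewrite ramp_eq0 by exact Hx; field. Qed.

Lemma step0_ge3 s : 3 <= s -> step0 s = 1.
Proof. intros Hs; unfold step0, diff3; rewrite !ramp_id by lra; field. Qed.

Lemma step1_ge3 s : 3 <= s -> step1 s = 0.
Proof. intros Hs; unfold step1, diff3; rewrite !ramp_id by lra; field. Qed.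

Lemma step_bounds s : Rabs (step0 s) <= 18 /\ Rabs (step1 s) <= 18 /\ Rabs (step2 s) <= 18.
Proof.
  destruct (Rle_dec s 3) as [Hs | Hs].
  - assert (Hr : forall x, x <= s -> 0 <= ramp x <= 3) by (intros; apply ramp_bounds; lra).
    assert (B0 : Rabs (step0 s) <= 4 * (27 / 6)).
    { apply diff3_bound; intros x Hx; destruct (Hr x Hx); split; nra. }
    assert (B1 : Rabs (step1 s) <= 4 * (9 / 2)).
    { apply diff3_bound; intros x Hx; destruct (Hr x Hx); split; nra. }
    assert (B2 : Rabs (step2 s) <= 4 * 3) by (apply diff3_bound; exact Hr).
    lra.
  - unfold step0, step1, step2, diff3; rewrite !ramp_id by lra.
    split; [|split]; apply Rabs_le; split; field_simplify; lra.
Qed.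

Lemma step1_mul_step0_shift s : step1 s * step0 (s - 3) = 0.
Proof.
  destruct (Rle_dec s 3).
  - rewrite step0_le0 by lra; ring.
  - rewrite step1_ge3 by lra; ring.
Qed.

Lemma step1_shift_mul_one_sub_step0 s : step1 (s - 3) * (1 - step0 s) = 0.
Proof.
  destruct (Rle_dec s 3).
  - rewrite step1_le0 by lra; ring.
  - rewrite step0_ge3 by lra; ring.
Qed.

Lemma continuous_pair {U V W : UniformSpace} (f : U -> V) (g : U -> W) x :
  continuous f x -> continuous g x -> continuous (fun t => (f t, g t)) x.
Proof.
  intros Hf Hg; apply (continuous_comp_2 f g pair); [exact Hf | exact Hg |].
  apply (continuous_ext (fun p => p)); [now intros [] | apply continuous_id].
Qed.

Local Notation C_R := (prod_NormedModule R_AbsRing R_NormedModule R_NormedModule).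

Lemma is_derive_RtoC (f : R -> R) x l : is_derive f x l ->
  @is_derive R_AbsRing C_R (fun t => RtoC (f t)) x (RtoC l).
Proof.
  intros Hf.
  assert (E : forall a, scal a (RtoC 1 : C_R) = RtoC a).
  { intros a; unfold scal; simpl; unfold prod_scal, scal; simpl; unfold mult; simpl.
    unfold RtoC; f_equal; ring. }
  rewrite <- E; eapply is_derive_ext; [intros t; apply E | apply is_derive_scal_l, Hf].
Qed.

Lemma ex_derive_continuous_R (f : R -> R) x : ex_derive f x -> continuous f x.
Proof. apply (@ex_derive_continuous R_AbsRing R_NormedModule). Qed.

Lemma exp_le_compat a b : a <= b -> exp a <= exp b.
Proof. intros [Hab | ->]; [left; apply exp_increasing, Hab | right; reflexivity]. Qed.

Definition damped (c a : R) (h : R -> R) (t : R) : R := c * exp (- a * t) * h t.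

Lemma is_derive_damped c a (h h' : R -> R) s : is_derive h s (h' s) ->
  is_derive (damped c a h) s (damped c a (fun t => h' t - a * h t) s).
Proof.
  intros Hh; unfold damped; auto_derive.
  - eexists; exact Hh.
  - replace (Derive (fun x : R => h x) s) with (h' s)
      by (symmetry; apply is_derive_unique, Hh); ring.
Qed.

Lemma continuous_damped c a (h : R -> R) s : continuous h s -> continuous (damped c a h) s.
Proof.
  intros Hh; apply (continuous_mult (fun t => c * exp (- a * t)) h); [|exact Hh].
  apply ex_derive_continuous_R; auto_derive; trivial.
Qed.

Lemma C2_with_damped c a (h h1 h2 : R -> R) :
  (forall s, is_derive h s (h1 s)) -> (forall s, is_derive h1 s (h2 s)) ->
  (forall s, continuous h2 s) ->
  C2_with (fun t => RtoC (damped c a h t))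
    (fun t => RtoC (damped c a (fun t => h1 t - a * h t) t))
    (fun t => RtoC (damped c a (fun t => (h2 t - a * h1 t) - a * (h1 t - a * h t)) t)).
Proof.
  intros Hh Hh1 Hh2; split; [|split]; intros s.
  - apply is_derive_RtoC, is_derive_damped, Hh.
  - apply is_derive_RtoC, (is_derive_damped c a _ (fun t => h2 t - a * h1 t)).
    apply (is_derive_minus h1 (fun t => a * h t)); [apply Hh1 | apply is_derive_scal, Hh].
  - assert (C1 : continuous h1 s) by (apply ex_derive_continuous_R; eexists; apply Hh1).
    assert (C0 : continuous h s) by (apply ex_derive_continuous_R; eexists; apply Hh).
    assert (Ca : forall f : R -> R, continuous f s -> continuous (fun t => a * f t) s)
      by (intros f Hf; apply (continuous_mult (fun _ => a) f); [apply continuous_const | exact Hf]).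
    apply continuous_pair; [|apply continuous_const].
    apply continuous_damped.
    apply (continuous_minus (fun t => h2 t - a * h1 t) (fun t => a * (h1 t - a * h t))).
    + apply (continuous_minus h2 (fun t => a * h1 t)); [apply Hh2 | apply Ca, C1].
    + apply Ca, (continuous_minus h1 (fun t => a * h t)); [exact C1 | apply Ca, C0].
Qed.

Lemma Cmod_damped c a h t : 0 <= c ->
  Cmod (RtoC (damped c a h t)) = c * exp (- a * t) * Rabs (h t).
Proof.
  intros Hc; unfold damped; rewrite Cmod_R, !Rabs_mult, (Rabs_pos_eq c), (Rabs_pos_eq (exp _));
    [reflexivity | left; apply exp_pos | exact Hc].
Qed.

Lemma damped_bounds c a lam A (h h1 h2 : R -> R) t : 0 <= c -> 0 <= lam <= 3 * a ->
  Rabs (h t) <= A -> Rabs (h1 t) <= A * lam -> Rabs (h2 t) <= A * lam ^ 2 ->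
  Cmod (RtoC (damped c a h t)) <= 16 * A * c * exp (- a * t) /\
  Cmod (RtoC (damped c a (fun t => h1 t - a * h t) t)) <= 16 * A * c * a * exp (- a * t) /\
  Cmod (RtoC (damped c a (fun t => (h2 t - a * h1 t) - a * (h1 t - a * h t)) t))
    <= 16 * A * c * a ^ 2 * exp (- a * t).
Proof.
  intros Hc Hlam H0 H1 H2.
  assert (HA : 0 <= A) by (eapply Rle_trans; [apply Rabs_pos | exact H0]).
  assert (He : 0 <= c * exp (- a * t)) by (apply Rmult_le_pos; [exact Hc | left; apply exp_pos]).
  assert (Ha : 0 <= a) by lra.
  apply Rabs_le_between in H0, H1, H2.
  assert (K1 : Rabs (h1 t - a * h t) <= 16 * A * a).
  { assert (-(a * A) <= a * h t <= a * A) by (split; nra).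
    assert (A * lam <= 3 * A * a) by nra.
    apply Rabs_le; split; nra. }
  assert (K2 : Rabs ((h2 t - a * h1 t) - a * (h1 t - a * h t)) <= 16 * A * a ^ 2).
  { assert (-(a * (A * lam)) <= a * h1 t <= a * (A * lam)) by (split; nra).
    assert (0 <= a ^ 2) by nra.
    assert (-(a ^ 2 * A) <= a ^ 2 * h t <= a ^ 2 * A) by (split; nra).
    assert (a * (A * lam) <= 3 * A * a ^ 2).
    { replace (3 * A * a ^ 2) with (a * (A * (3 * a))) by ring.
      apply Rmult_le_compat_l, Rmult_le_compat_l; lra. }
    assert (lam ^ 2 <= 9 * a ^ 2) by nra.
    assert (A * lam ^ 2 <= 9 * A * a ^ 2) by nra.
    apply Rabs_le; split; nra. }
  rewrite !Cmod_damped by exact Hc.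
  split; [|split].
  - replace (16 * A * c * exp (- a * t)) with (c * exp (- a * t) * (16 * A)) by ring.
    apply Rmult_le_compat_l; [exact He | apply Rabs_le; lra].
  - replace (16 * A * c * a * exp (- a * t)) with (c * exp (- a * t) * (16 * A * a)) by ring.
    apply Rmult_le_compat_l; [exact He | exact K1].
  - replace (16 * A * c * a ^ 2 * exp (- a * t)) with (c * exp (- a * t) * (16 * A * a ^ 2))
      by ring.
    apply Rmult_le_compat_l; [exact He | exact K2].
Qed.

Lemma CDerive_ext (f g : R -> C) x : (forall r, f r = g r) -> CDerive f x = CDerive g x.
Proof.
  intros Hfg; unfold CDerive.
  rewrite (Derive_ext (fun r => fst (f r)) (fun r => fst (g r))),
    (Derive_ext (fun r => snd (f r)) (fun r => snd (g r))); trivial;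
    intros r; rewrite Hfg; reflexivity.
Qed.

Lemma CDerive_mode (z w : C) k x :
  CDerive (fun r => Cplus (Cmult z (cis (k * r))) w) x = Cmult (Cmult z (0, k)) (cis (k * x)).
Proof.
  unfold CDerive, Cplus, Cmult, cis; simpl.
  f_equal; apply is_derive_unique; auto_derive; trivial; ring.
Qed.

Definition two_mode (k k' : R) (F G : R -> R) (x y t : R) : C :=
  Cplus (Cmult (RtoC (F t)) (cis (k * x))) (Cmult (RtoC (G t)) (cis (k' * y))).

Lemma dx_two_mode k k' F G x y t :
  dx (two_mode k k' F G) x y t = Cmult (Cmult (RtoC (F t)) (0, k)) (cis (k * x)).
Proof. apply CDerive_mode. Qed.

Lemma dy_two_mode k k' F G x y t :
  dy (two_mode k k' F G) x y t = Cmult (Cmult (RtoC (G t)) (0, k')) (cis (k' * y)).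
Proof.
  unfold dy; rewrite <- CDerive_mode with (w := Cmult (RtoC (F t)) (cis (k * x))).
  apply CDerive_ext; intros r; apply Cplus_comm.
Qed.

Lemma dxx_two_mode k k' F G x y t :
  dx (dx (two_mode k k' F G)) x y t = Cmult (RtoC (- k ^ 2 * F t)) (cis (k * x)).
Proof.
  unfold dx at 1.
  rewrite (CDerive_ext _ (fun r => Cplus (Cmult (Cmult (RtoC (F t)) (0, k)) (cis (k * r))) 0)).
  - rewrite CDerive_mode; unfold Cmult, RtoC; simpl; f_equal; ring.
  - intros r; rewrite dx_two_mode, Cplus_0_r; reflexivity.
Qed.

Lemma dyy_two_mode k k' F G x y t :
  dy (dy (two_mode k k' F G)) x y t = Cmult (RtoC (- k' ^ 2 * G t)) (cis (k' * y)).
Proof.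
  unfold dy at 1.
  rewrite (CDerive_ext _ (fun r => Cplus (Cmult (Cmult (RtoC (G t)) (0, k')) (cis (k' * r))) 0)).
  - rewrite CDerive_mode; unfold Cmult, RtoC; simpl; f_equal; ring.
  - intros r; rewrite dy_two_mode, Cplus_0_r; reflexivity.
Qed.

Lemma dt_two_mode k k' (F G F' G' : R -> R) x y t :
  is_derive F t (F' t) -> is_derive G t (G' t) ->
  dt (two_mode k k' F G) x y t = two_mode k k' F' G' x y t.
Proof.
  intros HF HG; unfold dt, CDerive, two_mode, Cplus, Cmult, RtoC; simpl.
  assert (EF : Derive (fun x : R => F x) t = F' t) by (apply is_derive_unique, HF).
  assert (EG : Derive (fun x : R => G x) t = G' t) by (apply is_derive_unique, HG).
  f_equal; apply is_derive_unique; auto_derive;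
    solve [repeat split; [exists (F' t); exact HF | exists (G' t); exact HG]
          | rewrite EF, EG; ring].
Qed.

(* [(-i be e^{i(k'y - kx)}, -i ga e^{i(kx - k'y)})] in real coordinates. *)
Definition drift (k k' : R) (be ga : R -> R) (x y t : R) : C * C :=
  ((be t * sin (k' * y - k * x), - (be t * cos (k' * y - k * x))),
   (ga t * sin (k * x - k' * y), - (ga t * cos (k * x - k' * y)))).

Lemma two_mode_solves k k' (F G F' G' be ga : R -> R) x y t :
  is_derive F t (F' t) -> is_derive G t (G' t) ->
  F' t + k ^ 2 * F t = ga t * k' * G t -> G' t + k' ^ 2 * G t = be t * k * F t ->
  dt (two_mode k k' F G) x y t
  = Cplus (laplacian (two_mode k k' F G) x y t)
      (Bgrad (drift k k' be ga) (two_mode k k' F G) x y t).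
Proof.
  intros HF HG EF EG.
  unfold laplacian, Bgrad.
  rewrite (dt_two_mode _ _ _ _ _ _ _ _ _ HF HG), dxx_two_mode, dyy_two_mode,
    dx_two_mode, dy_two_mode.
  unfold two_mode, drift, Cplus, Cmult, RtoC, cis; simpl.
  rewrite !sin_minus, !cos_minus.
  assert (P1 := sin2_cos2 (k * x)); assert (P2 := sin2_cos2 (k' * y)); unfold Rsqr in P1, P2.
  simpl in EF, EG.
  f_equal; nsatz.
Qed.

Lemma sin_cos_period (n : nat) a b : b = a + 2 * INR n * PI -> sin b = sin a /\ cos b = cos a.
Proof. intros ->; split; [apply sin_period | apply cos_period]. Qed.

Lemma drift_periodic (n n' : nat) (be ga : R -> R) : torus_periodic (drift (INR n) (INR n') be ga).
Proof.
  intros x y t; unfold drift.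
  destruct (sin_cos_period n (INR n' * y - INR n * (x + 2 * PI)) (INR n' * y - INR n * x))
    as [S1 C1]; [ring|].
  destruct (sin_cos_period n (INR n * x - INR n' * y) (INR n * (x + 2 * PI) - INR n' * y))
    as [S2 C2]; [ring|].
  destruct (sin_cos_period n' (INR n * x - INR n' * (y + 2 * PI)) (INR n * x - INR n' * y))
    as [S3 C3]; [ring|].
  destruct (sin_cos_period n' (INR n' * y - INR n * x) (INR n' * (y + 2 * PI) - INR n * x))
    as [S4 C4]; [ring|].
  rewrite <- S1, <- C1, S2, C2, <- S3, <- C3, S4, C4; split; reflexivity.
Qed.

Lemma drift_eq0 k k' (be ga : R -> R) x y t :
  be t = 0 -> ga t = 0 -> drift k k' be ga x y t = (RtoC 0, RtoC 0).
Proof. intros Hb Hg; unfold drift, RtoC; rewrite Hb, Hg; f_equal; f_equal; ring. Qed.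

Lemma Cmod_rotation r a : Cmod (r * sin a, - (r * cos a)) = Rabs r.
Proof.
  unfold Cmod; simpl.
  replace (r * sin a * (r * sin a * 1) + - (r * cos a) * (- (r * cos a) * 1)) with (Rabs r ^ 2).
  - apply sqrt_pow2, Rabs_pos.
  - rewrite pow2_abs; transitivity (r ^ 2 * (sin a ^ 2 + cos a ^ 2)); [|ring].
    rewrite <- !Rsqr_pow2, sin2_cos2; ring.
Qed.

Lemma C2norm_drift_le k k' (be ga : R -> R) x y t :
  C2norm (drift k k' be ga x y t) <= Rabs (be t) + Rabs (ga t).
Proof.
  unfold C2norm, drift; simpl; rewrite !Cmod_rotation.
  rewrite <- (sqrt_pow2 (Rabs (be t) + Rabs (ga t)))
    by (apply Rplus_le_le_0_compat; apply Rabs_pos).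
  apply sqrt_le_1_alt.
  assert (0 <= Rabs (be t) * Rabs (ga t)) by (apply Rmult_le_pos; apply Rabs_pos).
  nra.
Qed.

Ltac continuity_step :=
  match goal with
  | |- continuous (fun q => @?f q * @?g q) _ => apply (continuous_mult f g)
  | |- continuous (fun q => @?f q - @?g q) _ => apply (continuous_minus f g)
  | |- continuous (fun q => - @?f q) _ => apply (continuous_opp f)
  | |- continuous (fun q => sin (@?f q)) _ => apply (continuous_comp f sin); [|apply continuous_sin]
  | |- continuous (fun q => cos (@?f q)) _ => apply (continuous_comp f cos); [|apply continuous_cos]
  | |- continuous (fun q => (@?f q, @?g q)) _ => apply (continuous_pair f g)
  | |- continuous (fun _ => _) _ => apply continuous_const
  end.

Lemma drift_continuous k k' (be ga : R -> R) a b :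
  (forall t, continuous be t) -> (forall t, continuous ga t) -> cont_on_slab (drift k k' be ga) a b.
Proof.
  intros Hbe Hga [[x y] t] _.
  eapply filterlim_filter_le_1; [apply filter_le_within|].
  change (continuous (fun q : R * R * R => drift k k' be ga (fst (fst q)) (snd (fst q)) (snd q))
            ((x, y), t)).
  assert (Cx : continuous (fun q : R * R * R => fst (fst q)) ((x, y), t))
    by (apply (continuous_comp fst fst); apply continuous_fst).
  assert (Cy : continuous (fun q : R * R * R => snd (fst q)) ((x, y), t))
    by (apply (continuous_comp fst snd); [apply continuous_fst | apply continuous_snd]).
  assert (Cb : continuous (fun q : R * R * R => be (snd q)) ((x, y), t))
    by (apply (continuous_comp snd be); [apply continuous_snd | apply Hbe]).
  assert (Cg : continuous (fun q : R * R * R => ga (snd q)) ((x, y), t))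
    by (apply (continuous_comp snd ga); [apply continuous_snd | apply Hga]).
  unfold drift; repeat continuity_step; assumption.
Qed.

Section Transfer.

Variables k k' c1 c2 t1 : R.
Hypothesis k_ge1 : 1 <= k.
Hypothesis k_le_k' : k <= k'.
Hypothesis k'_le : k' <= k + 10.
Hypothesis c1_ge0 : 0 <= c1.
Hypothesis c2_ge0 : 0 <= c2.
Hypothesis amplitudes_match : c1 * exp (- k ^ 2 * t1) = c2 * exp (- k' ^ 2 * t1).

(* [switch 0] rises while [t - t1] runs through [[1/(2k), 3/(2k)]], [switch 3] while it runs
   through [[3/(2k), 5/(2k)]]. *)
Definition clock (t : R) : R := 3 * k * (t - t1) - 3 / 2.

Definition switch (d t : R) : R := step0 (clock t - d).
Definition switch1 (d t : R) : R := 3 * k * step1 (clock t - d).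
Definition switch2 (d t : R) : R := 9 * k ^ 2 * step2 (clock t - d).

Lemma is_derive_switch d s : is_derive (switch d) s (switch1 d s).
Proof.
  unfold switch, switch1, clock; auto_derive.
  - eexists; apply is_derive_step0.
  - rewrite (is_derive_unique _ _ _ (is_derive_step0 _)); unfold Rminus; ring.
Qed.

Lemma is_derive_switch1 d s : is_derive (switch1 d) s (switch2 d s).
Proof.
  unfold switch1, switch2, clock; auto_derive.
  - eexists; apply is_derive_step1.
  - rewrite (is_derive_unique _ _ _ (is_derive_step1 _)); unfold Rminus; ring.
Qed.

Lemma continuous_switch2 d s : continuous (switch2 d) s.
Proof.
  apply (continuous_mult (fun _ => 9 * k ^ 2) (fun s => step2 (clock s - d)));
    [apply continuous_const|].
  apply (continuous_comp (fun s => clock s - d) step2); [|apply continuous_step2].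
  apply ex_derive_continuous_R; unfold clock; auto_derive; trivial.
Qed.

Lemma switch_bounds d t :
  Rabs (switch d t) <= 19 /\ Rabs (switch1 d t) <= 19 * (3 * k) /\
  Rabs (switch2 d t) <= 19 * (3 * k) ^ 2.
Proof.
  destruct (step_bounds (clock t - d)) as [B0 [B1 B2]].
  unfold switch, switch1, switch2.
  rewrite !Rabs_mult, (Rabs_pos_eq 3), (Rabs_pos_eq 9), (Rabs_pos_eq k), (Rabs_pos_eq (k ^ 2))
    by nra.
  split; [|split]; nra.
Qed.

Definition fall (t : R) : R := 1 - switch 3 t.
Definition fall1 (t : R) : R := - switch1 3 t.
Definition fall2 (t : R) : R := - switch2 3 t.

Lemma is_derive_fall s : is_derive fall s (fall1 s).
Proof.
  replace (fall1 s) with (0 - switch1 3 s) by (unfold fall1; ring).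
  apply (is_derive_minus (fun _ => 1) (switch 3));
    [apply (is_derive_const 1) | apply is_derive_switch].
Qed.

Lemma is_derive_fall1 s : is_derive fall1 s (fall2 s).
Proof. apply (is_derive_opp (switch1 3)), is_derive_switch1. Qed.

Lemma continuous_fall2 s : continuous fall2 s.
Proof. apply (continuous_opp (switch2 3)), continuous_switch2. Qed.

Lemma fall_bounds t :
  Rabs (fall t) <= 20 /\ Rabs (fall1 t) <= 20 * (3 * k) /\ Rabs (fall2 t) <= 20 * (3 * k) ^ 2.
Proof.
  destruct (switch_bounds 3 t) as [B0 [B1 B2]]; unfold fall, fall1, fall2; rewrite !Rabs_Ropp.
  split; [|split]; [|lra | nra].
  apply Rabs_le_between in B0; apply Rabs_le; lra.
Qed.

Definition transfer (t : R) : R := exp ((k' ^ 2 - k ^ 2) * (t - t1)).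

Lemma amplitude_transfer t : c2 * exp (- k' ^ 2 * t) * transfer t = c1 * exp (- k ^ 2 * t).
Proof.
  unfold transfer; rewrite Rmult_assoc, <- exp_plus.
  replace (- k' ^ 2 * t + (k' ^ 2 - k ^ 2) * (t - t1)) with (- k' ^ 2 * t1 + - k ^ 2 * (t - t1))
    by ring.
  rewrite exp_plus, <- Rmult_assoc, <- amplitudes_match, Rmult_assoc, <- exp_plus.
  f_equal; f_equal; ring.
Qed.

Definition beta (t : R) : R := 3 * step1 (clock t) / transfer t.
Definition gamma (t : R) : R := - (3 * (k / k') * transfer t * step1 (clock t - 3)).

Lemma fall_mode_equation t :
  damped c1 (k ^ 2) (fun t => fall1 t - k ^ 2 * fall t) t + k ^ 2 * damped c1 (k ^ 2) fall t
  = gamma t * k' * damped c2 (k' ^ 2) (switch 0) t.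
Proof.
  assert (E : step1 (clock t - 3) = step1 (clock t - 3) * step0 (clock t)).
  { assert (S := step1_shift_mul_one_sub_step0 (clock t)); lra. }
  unfold damped, gamma, fall1, fall, switch1, switch; rewrite Rminus_0_r.
  rewrite <- (amplitude_transfer t); rewrite E at 1; field; lra.
Qed.

Lemma rise_mode_equation t :
  damped c2 (k' ^ 2) (fun t => switch1 0 t - k' ^ 2 * switch 0 t) t
    + k' ^ 2 * damped c2 (k' ^ 2) (switch 0) t
  = beta t * k * damped c1 (k ^ 2) fall t.
Proof.
  assert (E : step1 (clock t) = step1 (clock t) * (1 - step0 (clock t - 3))).
  { assert (S := step1_mul_step0_shift (clock t)); lra. }
  unfold damped, beta, fall, switch1, switch; rewrite !Rminus_0_r.
  rewrite <- (amplitude_transfer t); rewrite E at 1; field.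
  unfold transfer; apply Rgt_not_eq, exp_pos.
Qed.

Lemma continuous_beta t : continuous beta t.
Proof.
  apply ex_derive_continuous_R; unfold beta, transfer, clock; auto_derive.
  split; [eexists; apply is_derive_step1 | split; [apply Rgt_not_eq, exp_pos | trivial]].
Qed.

Lemma continuous_gamma t : continuous gamma t.
Proof.
  apply ex_derive_continuous_R; unfold gamma, transfer, clock; auto_derive.
  eexists; apply is_derive_step1.
Qed.

Lemma elapsed_le t a : t <= t1 + a / k -> k * (t - t1) <= a.
Proof.
  intros H; apply (Rmult_le_compat_l k) in H; [|lra].
  replace (k * (t1 + a / k)) with (k * t1 + a) in H by (field; lra); lra.
Qed.

Lemma elapsed_ge t a : t1 + a / k <= t -> a <= k * (t - t1).
Proof.
  intros H; apply (Rmult_le_compat_l k) in H; [|lra].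
  replace (k * (t1 + a / k)) with (k * t1 + a) in H by (field; lra); lra.
Qed.

Lemma transfer_window t : t1 <= t <= t1 + 7 / (2 * k) -> 1 <= transfer t <= exp 420.
Proof.
  intros [Ht1 HtT].
  assert (Hel : k * (t - t1) <= 7 / 2)
    by (apply elapsed_le; replace (7 / 2 / k) with (7 / (2 * k)) by (field; lra); exact HtT).
  assert (Hd : t - t1 <= 7 / 2) by nra.
  assert (Hs : 0 <= (k' + k) * (t - t1) <= 42) by (split; nra).
  unfold transfer; rewrite <- exp_0; split; apply exp_le_compat.
  - apply Rmult_le_pos; nra.
  - replace ((k' ^ 2 - k ^ 2) * (t - t1)) with ((k' - k) * ((k' + k) * (t - t1))) by ring.
    nra.
Qed.

Lemma drift_coefficients_bound t : t1 <= t <= t1 + 7 / (2 * k) ->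
  Rabs (beta t) + Rabs (gamma t) <= 54 * (1 + exp 420).
Proof.
  intros Ht; destruct (transfer_window t Ht) as [T1 T2].
  destruct (step_bounds (clock t)) as [_ [B1 _]].
  destruct (step_bounds (clock t - 3)) as [_ [B3 _]].
  apply Rabs_le_between in B1, B3.
  assert (Hi : 0 < / transfer t <= 1).
  { split; [apply Rinv_0_lt_compat; lra | rewrite <- Rinv_1; apply Rinv_le_contravar; lra]. }
  assert (Hr : 0 < k / k' <= 1).
  { split; [apply Rdiv_lt_0_compat; lra |].
    apply Rmult_le_reg_r with k'; [lra | unfold Rdiv; rewrite Rmult_assoc, Rinv_l; lra]. }
  assert (Hrt : 0 < k / k' * transfer t <= exp 420) by (split; nra).
  assert (Rabs (beta t) <= 54) by (unfold beta, Rdiv; apply Rabs_le; split; nra).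
  assert (Rabs (gamma t) <= 54 * exp 420).
  { unfold gamma; replace (3 * (k / k') * transfer t) with (3 * (k / k' * transfer t)) by ring.
    apply Rabs_le; split; nra. }
  lra.
Qed.

Definition profile_f : R -> R := damped c1 (k ^ 2) fall.
Definition profile_g : R -> R := damped c2 (k' ^ 2) (switch 0).
Definition solution : R -> R -> R -> C := two_mode k k' profile_f profile_g.
Definition transport : R -> R -> R -> C * C := drift k k' beta gamma.

Lemma solution_solves x y t :
  dt solution x y t = Cplus (laplacian solution x y t) (Bgrad transport solution x y t).
Proof.
  eapply two_mode_solves.
  - apply is_derive_damped, is_derive_fall.
  - apply is_derive_damped, is_derive_switch.
  - apply fall_mode_equation.
  - apply rise_mode_equation.
Qed.

Lemma early_window x y t : t <= t1 + 1 / (2 * k) ->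
  solution x y t = Cmult (RtoC c1) (Cmult (cis (k * x)) (RtoC (exp (- k ^ 2 * t)))) /\
  transport x y t = (RtoC 0, RtoC 0).
Proof.
  intros Ht.
  assert (Hel : k * (t - t1) <= 1 / 2)
    by (apply elapsed_le; replace (1 / 2 / k) with (1 / (2 * k)) by (field; lra); exact Ht).
  assert (Hc : clock t <= 0) by (unfold clock; lra).
  split.
  - unfold solution, two_mode, profile_f, profile_g, damped, fall, switch.
    rewrite !step0_le0 by lra; unfold Cplus, Cmult, RtoC, cis; simpl; f_equal; ring.
  - apply drift_eq0; unfold beta, gamma; rewrite !step1_le0 by lra; unfold Rdiv; ring.
Qed.

Lemma late_window x y t : t1 + 3 / k <= t ->
  solution x y t = Cmult (RtoC c2) (Cmult (cis (k' * y)) (RtoC (exp (- k' ^ 2 * t)))) /\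
  transport x y t = (RtoC 0, RtoC 0).
Proof.
  intros Ht.
  assert (Hc : 6 <= clock t) by (assert (H := elapsed_ge t 3 Ht); unfold clock; lra).
  split.
  - unfold solution, two_mode, profile_f, profile_g, damped, fall, switch.
    rewrite !step0_ge3 by lra; unfold Cplus, Cmult, RtoC, cis; simpl; f_equal; ring.
  - apply drift_eq0; unfold beta, gamma; rewrite !step1_ge3 by lra; unfold Rdiv; ring.
Qed.

Lemma profile_bounds t :
  Cmod (RtoC (damped c1 (k ^ 2) fall t)) <= 320 * c1 * exp (- k ^ 2 * t) /\
  Cmod (RtoC (damped c1 (k ^ 2) (fun t => fall1 t - k ^ 2 * fall t) t))
    <= 320 * c1 * k ^ 2 * exp (- k ^ 2 * t) /\
  Cmod (RtoC (damped c1 (k ^ 2)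
          (fun t => (fall2 t - k ^ 2 * fall1 t) - k ^ 2 * (fall1 t - k ^ 2 * fall t)) t))
    <= 320 * c1 * k ^ 4 * exp (- k ^ 2 * t) /\
  Cmod (RtoC (damped c2 (k' ^ 2) (switch 0) t)) <= 320 * c2 * exp (- k' ^ 2 * t) /\
  Cmod (RtoC (damped c2 (k' ^ 2) (fun t => switch1 0 t - k' ^ 2 * switch 0 t) t))
    <= 320 * c2 * k' ^ 2 * exp (- k' ^ 2 * t) /\
  Cmod (RtoC (damped c2 (k' ^ 2)
          (fun t => (switch2 0 t - k' ^ 2 * switch1 0 t)
                    - k' ^ 2 * (switch1 0 t - k' ^ 2 * switch 0 t)) t))
    <= 320 * c2 * k' ^ 4 * exp (- k' ^ 2 * t).
Proof.
  destruct (fall_bounds t) as [F0 [F1 F2]]; destruct (switch_bounds 0 t) as [G0 [G1 G2]].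
  assert (Hk : 0 <= 3 * k <= 3 * k ^ 2) by (split; nra).
  assert (Hk' : 0 <= 3 * k <= 3 * k' ^ 2) by (split; nra).
  destruct (damped_bounds c1 (k ^ 2) (3 * k) 20 fall fall1 fall2 t c1_ge0 Hk F0 F1 F2)
    as [Hf0 [Hf1 Hf2]].
  destruct (damped_bounds c2 (k' ^ 2) (3 * k) 20 (switch 0) (switch1 0) (switch2 0) t c2_ge0 Hk')
    as [Hg0 [Hg1 Hg2]]; [lra | lra | nra |].
  replace (k ^ 4) with ((k ^ 2) ^ 2) by ring; replace (k' ^ 4) with ((k' ^ 2) ^ 2) by ring.
  replace 320 with (16 * 20) by lra; repeat split; assumption.
Qed.

End Transfer.

Lemma INR_frequencies (k k' : nat) : (1 <= k)%nat -> (k <= k')%nat -> (k' <= k + 10)%nat ->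
  1 <= INR k /\ INR k <= INR k' /\ INR k' <= INR k + 10.
Proof.
  intros Hk Hkk' Hk10; repeat split.
  - apply (le_INR 1), Hk.
  - apply le_INR, Hkk'.
  - replace 10 with (INR 10) by (simpl; lra); rewrite <- plus_INR; apply le_INR, Hk10.
Qed.

Theorem mainTheorem17 :
  exists B0 M : R,
  forall (k k' : nat), (1 <= k)%nat -> (k <= k')%nat -> (k' <= k + 10)%nat ->
  let kr := INR k in let kr' := INR k' in
  let u1 := fun x (_ : R) t => Cmult (cis (kr * x)) (RtoC (exp (- kr ^ 2 * t))) in
  let u2 := fun (_ : R) y t => Cmult (cis (kr' * y)) (RtoC (exp (- kr' ^ 2 * t))) in
  forall c1 t1 c2 : R, 0 < c1 -> 0 <= t1 -> 0 < c2 ->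
    c1 * exp (- kr ^ 2 * t1) = c2 * exp (- kr' ^ 2 * t1) ->
  let T := t1 + 7 / (2 * kr) in
  exists (u : R -> R -> R -> C) (B : R -> R -> R -> C * C)
         (f f1 f2 g g1 g2 : R -> C),
    (* u = f(t) e^{ikx} + g(t) e^{ik'y}, f, g of class C^2 *)
    C2_with f f1 f2 /\ C2_with g g1 g2 /\
    (forall x y t, u x y t = Cplus (Cmult (f t) (cis (kr * x))) (Cmult (g t) (cis (kr' * y)))) /\
    (* B continuous bounded vector field on T^2 x [t1, T] *)
    torus_periodic B /\ cont_on_slab B t1 T /\
    (forall x y t, t1 <= t <= T -> C2norm (B x y t) <= B0) /\
    (* the equation *)
    (forall x y t, t1 <= t <= T ->
       dt u x y t = Cplus (laplacian u x y t) (Bgrad B u x y t)) /\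
    (forall x y t, t1 <= t <= t1 + 1 / (2 * kr) ->
       u x y t = Cmult (RtoC c1) (u1 x y t) /\ B x y t = (RtoC 0, RtoC 0)) /\
    (forall x y t, t1 + 3 / kr <= t <= T ->
       u x y t = Cmult (RtoC c2) (u2 x y t) /\ B x y t = (RtoC 0, RtoC 0)) /\
    (forall t, t1 <= t <= T ->
       Cmod (f t) <= M * c1 * exp (- kr ^ 2 * t) /\
       Cmod (f1 t) <= M * c1 * kr ^ 2 * exp (- kr ^ 2 * t) /\
       Cmod (f2 t) <= M * c1 * kr ^ 4 * exp (- kr ^ 2 * t) /\
       Cmod (g t) <= M * c2 * exp (- kr' ^ 2 * t) /\
       Cmod (g1 t) <= M * c2 * kr' ^ 2 * exp (- kr' ^ 2 * t) /\
       Cmod (g2 t) <= M * c2 * kr' ^ 4 * exp (- kr' ^ 2 * t)).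
Proof.
  exists (54 * (1 + exp 420)), 320.
  intros k k' Hk Hkk' Hk10 kr kr' u1 u2 c1 t1 c2 Hc1 _ Hc2 Hc T.
  destruct (INR_frequencies k k' Hk Hkk' Hk10) as [Ik [Ikk Ik10]].
  eexists (solution kr kr' c1 c2 t1), (transport kr kr' t1), _, _, _, _, _, _.
  split; [apply C2_with_damped;
          [apply is_derive_fall | apply is_derive_fall1 | apply continuous_fall2]|].
  split; [apply C2_with_damped;
          [apply is_derive_switch | apply is_derive_switch1 | apply continuous_switch2]|].
  split; [reflexivity|].
  split; [apply drift_periodic|].
  split; [apply drift_continuous; [apply continuous_beta | apply continuous_gamma]|].
  split; [intros x y t Ht; eapply Rle_trans;
          [apply C2norm_drift_le | apply drift_coefficients_bound; assumption]|].
  split; [intros x y t _; apply solution_solves; assumption|].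
  split; [intros x y t [_ Ht]; apply early_window; assumption|].
  split; [intros x y t [Ht _]; apply late_window; assumption|].
  intros t _; apply profile_bounds; [exact Ik | exact Ikk | lra | lra].
Qed.
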